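(* For integers $1\le N\le 50$, a $PCS_6^N$ exists if and only if $N=1$ or $N$ is even.
   Context: A binary sequence of length $N$ is a sequence $a=(a(0),\dots,a(N-1))$ with each $a(i)\in\{+1,-1\}$. Its periodic autocorrelation function is $\tilde\varphi_a(i)=\sum_{j=0}^{N-1}a(j)a(i+j \bmod N)$ for $0\le i<N$. A family $a_1,\dots,a_p$ of binary sequences, all of length $N$, is a $PCS_p^N$ (periodic complementary set) if $\sum_{k=1}^p\tilde\varphi_{a_k}(i)=0$ for all $0<i<N$. The sequences in a family need not be distinct. *)

From HB Require Import structures.
From mathcomp Require Import all_boot all_order all_algebra.
Unset Strict Implicit. Unset Printing Implicit Defensive.
Import Order.TTheory GRing.Theory Num.Theory.
Local Open Scope ring_scope.

(* A binary sequence of length N is represented by a : nat -> int, of which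
   only the entries a 0, ..., a (N-1) are relevant; they must be +1 or -1. *)
Definition binary_seq (N : nat) (a : nat -> int) : Prop :=
  forall j : nat, (j < N)%N -> a j = 1 \/ a j = -1.

Definition pacf (N : nat) (a : nat -> int) (i : nat) : int :=
  \sum_(j < N) a j * a ((i + j) %% N)%N.

Definition is_PCS (p N : nat) (a : 'I_p -> nat -> int) : Prop :=
  (forall k : 'I_p, binary_seq N (a k)) /\
  (forall i : nat, (0 < i)%N -> (i < N)%N -> \sum_(k < p) pacf N (a k) i = 0).

Definition PCS_exists (p N : nat) : Prop := exists a : 'I_p -> nat -> int, @is_PCS p N a.

From mathcomp Require Import all_boot all_order all_algebra zify.
Set Implicit Arguments. Unset Strict Implicit. Unset Printing Implicit Defensive.
Import Order.TTheory GRing.Theory Num.Theory.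
Local Open Scope ring_scope.

(* Necessity is a counting argument modulo 4.  For a +-1 sequence a and any
   shift i, 1 - a(j) a(j+i) = 4 [a(j) = -1, a(j+i) = 1] + a(j) - a(j+i), and
   the terms a(j) - a(j+i) cancel over a full period, so
   pacf_a(i) = N - 4 * (number of rises -1 -> +1 at distance i).
   Summing over a PCS_p^N at shift 1 (available when N > 1) gives
   p N = 4 * (total number of rises), hence 4 | p N; for p = 6 this forces
   N to be even. *)

Lemma sum_cyclic_shift (N i : nat) (F : nat -> int) : (0 < N)%N ->
  \sum_(j < N) F ((i + j) %% N)%N = \sum_(j < N) F j.
Proof.
move=> N_gt0.
pose shift (j : 'I_N) : 'I_N := Ordinal (ltn_pmod (i + j) N_gt0).
have shift_inj : injective shift.
  move=> j1 j2 /(congr1 val) /= /eqP.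
  by rewrite eqn_modDl !modn_small ?ltn_ord // => /eqP /val_inj.
by rewrite [RHS](reindex_inj shift_inj).
Qed.

Definition rise (x y : int) : nat := (x == -1) && (y == 1).

Lemma pm1_product (x y : int) : (x = 1 \/ x = -1) -> (y = 1 \/ y = -1) ->
  1 - x * y = 4 * (rise x y)%:Z + x - y.
Proof. by case=> ->; case=> ->. Qed.

Definition rises (N : nat) (a : nat -> int) (i : nat) : nat :=
  \sum_(j < N) rise (a j) (a ((i + j) %% N)%N).

Lemma pacf_rises (N : nat) (a : nat -> int) (i : nat) :
  (0 < N)%N -> binary_seq N a -> pacf N a i = N%:Z - 4 * (rises N a i)%:Z.
Proof.
move=> N_gt0 a_pm1.
have defect : \sum_(j < N) (1 - a j * a ((i + j) %% N)%N) = N%:Z - pacf N a i.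
  by rewrite sumrB sumr_const card_ord natz.
have count : \sum_(j < N) (1 - a j * a ((i + j) %% N)%N) = 4 * (rises N a i)%:Z.
  rewrite (eq_bigr _ (fun j _ => pm1_product (a_pm1 _ (ltn_ord j))
                                   (a_pm1 _ (ltn_pmod (i + j) N_gt0)))).
  rewrite sumrB big_split /= sum_cyclic_shift // addrK -mulr_sumr.
  by rewrite /rises -natz natr_sum; congr (_ * _); apply: eq_bigr => j _; rewrite natz.
by rewrite -count defect opprB addrC subrK.
Qed.

Lemma PCS_size_dvd4 (p N : nat) : (1 < N)%N -> PCS_exists p N -> (4 %| p * N)%N.
Proof.
move=> N_gt1 [a [a_pm1 a_compl]].
have := a_compl 1%N isT N_gt1.
rewrite (eq_bigr _ (fun k _ => pacf_rises 1 (ltnW N_gt1) (a_pm1 k))).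
rewrite sumrB sumr_const card_ord -mulr_sumr -(big_morph Posz PoszD (erefl 0%:Z)).
move/eqP; rewrite subr_eq0 -PoszM -[Posz N]natz -mulrnA natz => /eqP [sizes_eq].
by rewrite mulnC sizes_eq dvdn_mulr.
Qed.

Lemma no_PCS6_odd (N : nat) : (1 < N)%N -> odd N -> ~ PCS_exists 6 N.
Proof.
move=> N_gt1 N_odd /(PCS_size_dvd4 N_gt1).
by rewrite -(odd_double_half N) N_odd; lia.
Qed.

(* Computable version of the definitions: a table of six boolean words,
   read as +-1 sequences, and sums as list folds. *)
Definition pm1 (b : bool) : int := if b then 1 else -1.

Definition table_seq (w : seq (seq bool)) (k j : nat) : int :=
  pm1 (nth false (nth [::] w k) j).

Definition list_sum (s : seq nat) (F : nat -> int) : int :=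
  foldr (fun j acc => F j + acc) 0 s.

Lemma sum_ord_list (N : nat) (F : nat -> int) :
  \sum_(j < N) F j = list_sum (iota 0 N) F.
Proof. by rewrite -(big_mkord xpredT) /index_iota subn0 unlock. Qed.

Definition PCS6b (N : nat) (w : seq (seq bool)) : bool :=
  all (fun i => list_sum (iota 0 6) (fun k =>
         list_sum (iota 0 N) (fun j => table_seq w k j * table_seq w k ((i + j) %% N)%N))
       == 0)
      (iota 1 N.-1).

Lemma PCS6bP (N : nat) (w : seq (seq bool)) : PCS6b N w -> PCS_exists 6 N.
Proof.
move=> /allP w_compl; exists (fun k => table_seq w k); split.
  by move=> k j _; rewrite /table_seq /pm1; case: ifP; [left|right].
move=> i i_gt0 i_ltN.
have i_range : i \in iota 1 N.-1.
  by rewrite mem_iota i_gt0 add1n prednK ?(leq_trans i_gt0 (ltnW i_ltN)).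
have := eqP (w_compl i i_range).
rewrite -sum_ord_list; under eq_bigr => k _ do rewrite -sum_ord_list.
exact.
Qed.

Notation P := true.
Notation M := false.

Definition witness (N : nat) : seq (seq bool) :=
  match N with
  | 1 => [:: [:: P]; [:: P]; [:: P]; [:: P]; [:: P]; [:: P]]
  | 2 => [::
    [:: P; M];
    [:: P; P];
    [:: P; P];
    [:: P; M];
    [:: P; M];
    [:: M; M]]
  | 4 => [::
    [:: P; M; P; P];
    [:: P; P; M; P];
    [:: P; M; M; M];
    [:: P; P; P; M];
    [:: M; P; M; M];
    [:: M; M; M; P]]
  | 6 => [::
    [:: P; M; P; P; P; P];
    [:: M; P; M; M; M; P];
    [:: P; M; P; M; M; P];
    [:: M; M; M; M; M; P];
    [:: M; M; P; M; P; P];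
    [:: M; M; P; P; P; M]]
  | 8 => [::
    [:: P; M; P; M; P; P; M; P];
    [:: P; M; M; M; P; M; P; M];
    [:: M; M; M; M; M; M; M; P];
    [:: M; M; P; P; P; P; M; M];
    [:: M; P; P; M; M; M; P; P];
    [:: P; P; M; M; P; P; M; P]]
  | 10 => [::
    [:: P; P; P; M; P; M; M; M; M; M];
    [:: P; P; P; M; P; M; M; P; M; M];
    [:: M; M; M; P; M; M; M; M; P; M];
    [:: M; M; M; P; P; M; M; M; M; P];
    [:: P; P; M; P; P; P; M; M; P; M];
    [:: M; M; M; P; M; P; P; P; M; P]]
  | 12 => [::
    [:: P; P; M; P; P; M; M; M; P; P; M; M];
    [:: P; M; P; M; M; M; P; M; M; M; M; P];
    [:: M; M; P; M; P; M; M; M; M; P; M; M];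
    [:: M; P; P; P; P; P; P; M; M; P; M; P];
    [:: P; P; M; M; M; M; M; P; P; P; P; M];
    [:: M; M; P; M; P; M; M; M; P; M; P; P]]
  | 14 => [::
    [:: P; M; P; M; P; P; P; P; P; P; P; P; P; M];
    [:: M; M; M; P; P; P; M; P; P; P; P; M; M; M];
    [:: P; P; M; M; P; P; P; M; M; M; P; P; P; P];
    [:: P; M; P; P; M; P; M; M; P; P; M; P; M; M];
    [:: P; M; M; P; M; P; M; P; M; P; P; M; M; P];
    [:: M; M; M; P; M; M; P; P; M; M; P; M; P; P]]
  | 16 => [::
    [:: M; M; P; P; P; P; P; P; P; M; M; M; M; P; P; P];
    [:: M; M; P; M; M; M; P; P; P; M; P; M; P; M; M; P];
    [:: P; P; M; M; M; M; P; P; P; M; P; P; M; P; P; M];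
    [:: P; M; P; M; M; P; M; M; M; M; P; M; P; M; P; P];
    [:: P; M; M; M; M; M; M; P; M; P; M; P; M; M; M; M];
    [:: M; M; P; P; P; M; M; P; P; P; M; P; P; M; M; P]]
  | 18 => [::
    [:: M; P; P; P; P; P; P; P; M; P; M; P; P; P; P; P; M; P];
    [:: P; P; M; P; M; P; P; M; P; M; M; M; P; M; P; M; P; P];
    [:: M; M; P; P; M; M; M; P; M; M; M; P; P; P; P; M; P; P];
    [:: M; P; P; M; P; P; P; P; P; M; M; M; M; M; M; P; P; M];
    [:: M; M; P; P; M; M; M; P; P; M; P; M; M; P; P; P; M; P];
    [:: M; P; P; P; M; P; M; M; P; P; M; P; M; M; P; M; M; M]]
  | 20 => [::
    [:: P; P; M; P; M; P; P; M; P; M; P; M; M; P; P; M; P; P; M; M];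
    [:: M; P; M; M; P; M; M; M; P; M; P; M; P; P; P; M; M; M; M; M];
    [:: M; M; P; P; M; M; P; M; P; P; M; M; M; P; P; M; M; M; M; M];
    [:: M; M; M; M; P; P; P; P; M; M; P; P; P; P; P; P; P; P; M; P];
    [:: P; P; P; M; P; M; M; M; P; M; P; M; M; M; M; M; P; P; M; P];
    [:: P; M; M; P; M; M; P; P; P; M; M; M; P; P; M; M; P; M; P; M]]
  | 22 => [::
    [:: P; M; P; P; P; M; M; P; M; M; P; P; P; M; P; P; P; P; M; M; M; P];
    [:: M; P; P; P; P; M; P; M; M; M; M; P; M; P; M; M; M; M; M; P; P; P];
    [:: M; P; M; P; P; M; P; M; M; P; P; P; P; P; M; M; M; M; M; P; M; M];
    [:: M; P; M; M; M; M; M; P; P; M; M; M; P; P; M; M; M; P; M; M; M; M];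
    [:: M; P; M; P; M; P; P; P; M; P; M; M; P; M; P; P; M; M; P; M; M; M];
    [:: P; M; P; M; P; P; P; M; P; M; M; M; P; P; M; M; P; M; M; P; M; M]]
  | 24 => [::
    [:: M; P; M; P; P; M; M; M; P; M; P; P; P; M; P; P; P; M; M; P; M; P; M; M];
    [:: P; M; P; M; P; P; M; P; P; M; M; P; P; M; P; M; M; M; M; M; P; P; M; M];
    [:: P; M; P; M; M; P; P; P; M; M; P; P; M; M; M; M; M; M; M; P; M; P; M; M];
    [:: P; P; P; M; M; M; M; P; P; M; P; M; M; M; P; P; P; M; P; M; P; P; M; M];
    [:: P; P; P; P; P; M; P; M; M; P; M; P; P; P; M; M; M; M; P; M; M; P; P; M];
    [:: P; P; P; P; M; P; M; M; M; M; M; M; M; P; M; M; M; P; M; M; M; M; M; M]]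
  | 26 => [::
    [:: P; P; P; M; P; M; P; M; M; M; M; M; P; M; P; P; M; M; M; P; M; P; P; P; P; M];
    [:: P; P; M; M; M; M; P; P; M; M; P; P; M; M; P; M; M; M; P; M; M; P; M; M; P; M];
    [:: P; M; M; P; M; P; P; P; P; M; P; M; P; M; M; P; M; P; M; M; P; P; P; M; M; P];
    [:: M; P; M; P; P; P; M; M; P; M; M; M; M; M; P; M; P; M; P; M; M; M; M; M; P; M];
    [:: M; P; P; P; M; M; P; P; P; P; M; M; P; M; M; M; M; M; M; P; P; P; M; M; M; M];
    [:: P; M; M; M; M; M; M; M; M; P; P; M; P; M; M; P; P; M; P; P; P; M; M; M; P; M]]
  | 28 => [::
    [:: M; M; M; P; P; M; M; M; P; P; P; M; P; P; P; M; P; P; M; P; M; M; M; P; M; M; P; P];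
    [:: P; M; P; P; M; P; M; P; P; M; P; M; M; P; P; P; P; P; P; M; M; M; P; M; P; P; P; M];
    [:: P; P; P; M; P; P; P; M; P; P; P; M; P; M; M; M; P; M; M; M; M; P; P; P; P; P; P; P];
    [:: M; M; P; P; P; P; M; P; P; M; P; M; P; M; M; P; P; P; P; P; M; M; M; P; P; M; M; P];
    [:: M; M; M; P; P; P; M; M; M; M; M; M; M; P; P; P; M; P; M; P; P; M; M; P; M; P; P; M];
    [:: M; P; P; M; M; P; M; M; M; M; M; P; P; M; P; M; P; M; P; M; M; P; M; P; M; M; P; M]]
  | 30 => [::
    [:: M; M; P; M; P; M; P; P; P; M; P; P; M; M; M; M; P; P; P; P; M; P; P; P; M; M; P; M; M; M];
    [:: M; P; P; M; M; P; P; P; M; P; P; P; M; M; M; P; M; P; M; M; M; M; M; M; P; P; M; P; P; P];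
    [:: P; M; P; P; M; M; P; P; P; P; M; M; P; P; P; P; P; M; P; P; M; P; P; P; P; M; P; P; M; P];
    [:: M; P; M; M; M; M; P; M; P; P; P; M; P; M; M; M; P; M; P; P; M; M; P; M; P; M; M; P; M; P];
    [:: M; P; M; P; P; P; P; P; P; P; M; P; P; M; M; M; M; M; P; M; P; P; M; M; M; P; P; M; P; P];
    [:: M; P; P; M; M; M; P; P; P; M; M; M; M; P; M; P; P; M; M; M; P; M; M; M; P; P; P; P; M; P]]
  | 32 => [::
    [:: M; M; M; M; P; P; P; M; P; M; P; M; P; P; P; P; P; P; M; M; M; P; M; M; M; P; P; M; P; M; P; P];
    [:: M; P; M; P; P; M; P; P; P; P; P; P; P; M; P; M; P; M; M; P; M; M; M; P; M; M; P; P; P; P; P; M];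
    [:: P; P; P; M; M; P; M; M; M; M; M; P; P; M; P; M; P; M; M; M; P; P; P; M; M; P; P; M; P; P; M; P];
    [:: P; M; P; P; M; M; M; P; M; P; M; M; P; P; P; P; P; P; M; P; P; M; P; P; M; M; P; P; P; M; M; M];
    [:: P; M; M; M; M; P; M; P; M; P; M; M; M; M; P; P; M; P; P; P; M; M; P; P; M; P; M; M; M; M; M; P];
    [:: P; P; M; P; M; M; M; M; M; M; M; P; M; P; P; M; M; M; P; M; M; P; P; M; M; M; M; P; M; P; M; M]]
  | 34 => [::
    [:: M; M; P; M; M; M; P; M; P; P; M; P; M; M; P; P; P; M; P; M; P; M; P; P; P; P; P; M; M; P; P; P; M; M];
    [:: M; P; P; P; M; P; P; M; P; P; P; M; P; P; P; P; P; P; P; M; M; M; P; M; M; P; P; P; M; M; M; P; M; P];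
    [:: P; P; M; P; P; M; P; P; M; P; M; P; M; M; P; P; M; P; P; P; P; M; P; P; P; P; M; M; M; M; M; M; M; P];
    [:: M; P; M; P; M; P; P; P; M; P; P; P; M; P; P; M; P; M; M; P; M; M; P; P; M; M; M; M; P; P; P; M; P; P];
    [:: M; P; P; P; P; P; M; P; M; M; M; P; M; M; M; P; M; M; P; M; M; P; M; P; P; M; P; P; M; M; P; P; M; M];
    [:: P; P; P; P; M; M; P; M; P; P; P; P; M; P; P; P; P; M; M; M; P; P; M; P; M; P; P; P; P; M; M; M; P; P]]
  | 36 => [::
    [:: M; P; P; P; P; M; P; P; P; M; P; P; P; P; P; M; M; P; P; M; M; M; P; M; P; P; P; M; P; P; P; M; M; P; P; P];
    [:: M; M; P; M; P; P; P; M; P; P; P; M; P; M; P; P; M; M; P; P; M; P; P; P; P; M; P; P; P; M; P; P; M; M; P; M];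
    [:: M; M; M; P; P; P; P; M; M; P; M; P; M; P; P; P; M; P; M; M; M; M; P; M; P; M; P; M; P; M; M; P; P; P; P; M];
    [:: M; P; M; M; P; M; P; P; M; M; M; M; M; M; P; M; M; M; M; P; M; P; P; P; P; P; P; P; P; P; M; M; P; M; P; P];
    [:: M; M; M; P; P; P; P; P; M; M; M; P; M; M; P; M; P; P; M; P; P; M; M; P; M; M; P; M; P; P; P; M; M; M; P; M];
    [:: M; P; M; M; P; M; P; M; M; P; M; M; M; P; P; P; P; M; M; M; P; P; M; M; M; P; P; P; P; M; P; P; M; P; P; P]]
  | 38 => [::
    [:: M; M; M; P; M; P; M; M; M; P; P; M; P; M; P; M; P; P; M; M; M; P; P; P; M; M; M; M; M; M; P; P; P; P; M; M; P; P];
    [:: M; M; M; P; P; M; P; M; M; P; M; M; M; M; M; M; M; M; M; M; P; M; P; P; M; M; P; P; M; M; P; M; P; M; P; M; M; M];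
    [:: P; P; M; M; P; M; P; P; M; P; M; M; M; M; M; M; P; P; M; P; P; M; P; M; M; P; M; P; M; P; P; P; P; P; M; M; P; P];
    [:: M; M; M; P; M; M; M; P; M; P; M; P; P; P; P; M; M; M; M; M; M; P; M; M; P; P; P; M; P; M; P; P; M; P; P; M; P; P];
    [:: M; M; M; M; P; P; M; M; M; P; P; M; P; P; P; P; M; P; P; M; P; P; M; P; P; M; M; P; M; M; M; P; M; P; M; P; M; M];
    [:: P; M; P; P; P; M; M; M; P; M; M; M; P; M; M; M; P; P; P; M; M; M; P; P; M; P; M; M; M; P; P; P; P; M; P; M; M; P]]
  | 40 => [::
    [:: P; M; P; P; M; M; P; M; M; P; P; M; P; M; M; M; P; P; M; M; P; P; M; M; M; P; P; P; P; P; M; M; P; M; P; M; M; M; M; M];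
    [:: P; P; P; M; M; P; P; P; M; M; P; P; P; P; M; P; P; M; M; P; P; M; M; P; M; M; P; M; P; M; M; P; P; P; P; P; M; P; M; P];
    [:: M; M; M; M; P; M; P; M; M; P; M; P; P; P; M; P; P; M; P; M; M; P; M; P; M; P; P; P; P; P; M; P; M; P; M; P; M; M; M; P];
    [:: M; P; M; P; P; P; P; P; M; M; M; M; P; M; M; M; P; P; P; P; M; M; M; M; M; M; P; M; P; M; M; M; M; M; M; M; M; P; M; M];
    [:: P; P; P; M; P; M; M; P; P; M; M; M; M; P; M; P; P; P; M; M; P; M; M; M; M; P; M; P; M; M; M; M; P; P; P; M; M; P; P; M];
    [:: P; M; P; P; P; P; M; M; P; P; M; P; M; M; M; M; P; M; M; P; P; P; M; P; M; M; M; M; M; P; M; P; P; M; P; P; M; M; P; P]]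
  | 42 => [::
    [:: P; P; M; P; M; P; M; P; M; M; P; M; M; M; M; M; M; P; P; M; M; P; M; M; M; P; M; P; M; M; P; M; M; P; P; P; P; P; M; M; P; P];
    [:: P; P; P; M; M; M; M; P; P; P; M; P; M; M; M; P; M; M; P; M; M; P; M; P; M; P; M; M; P; P; P; M; P; M; M; M; P; P; M; P; M; M];
    [:: P; M; P; P; P; M; M; M; P; M; M; P; M; P; P; M; P; M; M; P; M; M; P; P; M; M; M; P; M; P; M; P; P; P; M; P; M; M; M; M; M; M];
    [:: M; P; M; M; P; P; P; M; M; P; M; M; P; M; P; P; P; P; M; M; P; P; P; M; P; P; P; M; M; M; M; M; M; M; M; M; M; P; P; P; M; P];
    [:: M; P; P; M; M; M; M; P; P; P; P; M; M; M; M; P; M; M; M; M; M; P; M; M; M; P; M; M; M; M; M; M; P; M; P; P; M; P; M; P; P; M];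
    [:: P; P; P; P; P; P; P; M; P; M; M; M; P; M; M; M; P; P; P; M; M; P; P; M; P; P; M; P; P; M; P; M; P; P; M; M; P; P; M; M; M; P]]
  | 44 => [::
    [:: P; M; M; P; P; P; P; P; P; P; M; M; M; P; P; M; M; M; M; M; P; M; P; P; P; M; M; P; P; M; P; M; P; M; P; M; M; M; M; P; M; P; P; P];
    [:: P; P; M; M; P; M; P; M; P; M; M; P; M; M; P; P; M; P; M; P; P; P; P; M; P; P; M; M; P; P; P; P; P; P; P; P; M; P; M; M; M; M; P; M];
    [:: M; M; P; P; M; M; P; M; P; M; M; M; P; M; M; P; M; P; P; M; P; M; P; M; P; P; P; P; M; M; M; M; M; M; M; P; M; M; P; M; M; M; M; M];
    [:: M; P; P; M; M; P; P; P; P; P; M; P; P; P; M; M; M; M; P; P; P; P; P; P; P; M; P; M; M; P; M; P; M; P; M; M; M; P; P; P; M; P; M; P];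
    [:: M; P; P; M; M; P; P; M; M; P; P; P; P; P; P; M; M; P; P; M; M; M; M; M; P; P; M; P; P; M; P; M; M; P; M; M; P; M; M; P; M; M; M; M];
    [:: M; M; P; P; M; M; P; P; M; M; P; M; P; M; P; P; M; M; P; P; M; P; M; P; P; M; M; M; P; P; P; P; M; M; M; P; P; P; M; M; M; P; M; P]]
  | 46 => [::
    [:: M; M; M; M; P; M; P; M; P; P; M; P; P; M; M; P; P; M; P; M; P; P; M; P; M; P; M; P; M; M; M; M; M; P; M; P; P; P; P; P; M; M; M; M; M; P];
    [:: M; M; P; P; M; P; P; M; M; P; M; P; P; M; P; M; P; P; M; M; M; P; M; P; P; P; P; P; P; M; P; P; P; M; M; M; M; M; M; M; P; P; M; P; P; M];
    [:: M; P; M; M; P; M; M; P; M; M; M; P; P; M; P; M; M; P; M; P; P; P; M; M; P; P; M; P; P; P; M; M; P; M; M; P; P; M; P; P; P; M; M; M; P; P];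
    [:: M; P; M; P; P; P; P; P; P; M; P; P; P; M; P; P; P; P; M; P; P; P; M; M; M; P; P; P; P; M; P; P; M; M; P; P; P; M; P; P; P; P; M; M; M; P];
    [:: P; M; M; P; P; P; P; M; P; P; P; P; M; P; M; M; P; P; M; P; M; P; M; P; M; M; M; P; M; M; M; M; P; P; P; M; M; P; M; M; M; M; P; P; P; M];
    [:: P; P; M; M; P; P; P; P; P; M; P; M; P; P; P; M; M; M; M; M; M; M; M; M; P; P; M; M; P; M; P; P; M; M; P; M; P; P; P; M; M; M; P; M; P; P]]
  | 48 => [::
    [:: M; P; P; M; M; P; P; M; P; P; M; P; M; M; M; P; P; P; M; M; P; M; P; P; P; P; M; M; P; P; P; M; P; M; M; M; M; M; P; M; M; P; P; P; M; M; M; M];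
    [:: M; M; P; P; M; M; P; P; P; M; M; M; M; P; M; M; P; M; M; P; P; P; P; M; P; M; M; P; P; M; P; P; P; P; M; P; M; P; P; P; M; M; P; M; M; P; M; P];
    [:: P; P; M; P; P; P; M; M; M; M; P; M; P; M; P; P; M; P; M; M; P; P; P; M; M; M; M; M; M; P; M; P; M; P; M; M; M; P; P; M; M; P; P; P; M; M; M; M];
    [:: P; M; M; M; P; M; M; P; M; P; P; P; P; P; P; M; M; M; M; P; P; M; P; P; M; P; M; P; M; M; M; M; M; M; M; P; M; M; P; P; M; M; P; M; M; P; M; P];
    [:: P; P; P; P; P; P; P; P; P; M; M; P; P; M; M; M; M; M; P; M; M; M; P; M; P; M; P; P; M; M; M; M; M; M; M; P; P; M; M; M; M; M; P; M; P; M; M; M];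
    [:: P; M; P; M; P; M; P; M; P; P; M; M; P; P; M; P; M; P; P; P; M; P; P; P; P; P; P; M; M; P; M; P; M; P; M; M; P; P; M; P; M; P; P; P; P; P; M; P]]
  | 50 => [::
    [:: P; M; M; P; M; M; P; P; P; P; M; M; M; M; P; M; P; M; M; P; P; P; M; P; P; M; M; P; M; P; M; M; M; P; M; P; P; P; P; P; M; P; M; P; P; M; P; M; M; M];
    [:: M; M; M; P; M; P; P; P; M; M; M; M; M; M; P; M; M; M; M; P; M; M; P; M; M; M; M; P; P; P; M; P; P; M; M; M; M; P; P; M; M; P; M; P; M; P; P; P; M; M];
    [:: P; P; M; P; P; M; M; M; M; P; P; M; P; M; M; P; M; P; M; P; M; P; M; P; M; M; M; P; P; P; P; P; P; M; P; P; P; P; M; P; P; P; M; P; P; M; P; P; M; P];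
    [:: P; P; P; P; M; P; M; P; M; P; M; P; P; P; P; M; P; P; M; P; M; M; M; P; M; M; P; M; M; P; P; P; M; M; M; M; M; M; M; M; P; P; P; P; P; M; P; M; P; M];
    [:: M; P; P; M; M; M; P; P; M; M; M; P; P; M; P; P; M; M; P; P; P; P; M; M; P; M; M; M; M; P; P; M; M; M; M; M; P; P; M; M; P; P; M; M; P; P; M; M; M; P];
    [:: P; P; P; M; P; P; M; P; M; M; P; M; P; M; M; M; M; M; P; P; M; P; P; P; M; P; P; P; P; P; P; M; M; P; M; P; P; M; M; M; P; P; M; M; M; M; P; P; M; P]]
  | _ => [::]
  end.

Lemma witnesses_ok :
  all (fun N => ((N == 1) || ~~ odd N) ==> PCS6b N (witness N)) (iota 1 50).
Proof. by vm_compute. Qed.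

Theorem proposition5 (N : nat) (hN1 : (1 <= N)%N) (hN2 : (N <= 50)%N) :
  PCS_exists 6 N <-> (N = 1%N \/ ~~ odd N).
Proof.
split.
- move=> PCS_N; case: (boolP (odd N)) => N_odd; last by right.
  have [N_gt1 | N_le1] := ltnP 1 N; first by case: (no_PCS6_odd N_gt1 N_odd).
  by left; apply/eqP; rewrite eqn_leq N_le1 hN1.
- move=> N_ok; apply: (@PCS6bP N (witness N)).
  have /allP/(_ N) := witnesses_ok.
  rewrite mem_iota hN1 add1n ltnS hN2 => /(_ isT) /implyP; apply.
  by case: N_ok => [-> | ->]; rewrite ?orbT.
Qed.
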